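(* Let $\mathcal{X}=\{1,\dots,n\}$, let $\pi$ be a strictly positive probability distribution on $\mathcal{X}$, let $P$ be a $\pi$-reversible transition matrix and let $\alpha\in[0,1]$. For every $S\subset\mathcal{X}$ with $S\neq\emptyset,\mathcal{X}$, $$\|A_\alpha(S)-\Pi\|_{F,\pi}^2=\alpha^2\operatorname{Tr}(P^2)-2\alpha(1-\alpha)g(S)+1-2\alpha^2=F_1(S)-F_2(S),$$ where $$F_1(S)=2\alpha(1-\alpha)\Big(\frac{1}{\pi(S)}\sum_{x,y\in S'}\pi(x)P(x,y)+\frac{1}{\pi(S')}\sum_{x,y\in S}\pi(x)P(x,y)\Big),$$ $$F_2(S)=\frac{2\alpha(1-\alpha)}{\pi(S)\pi(S')}+6\alpha^2-4\alpha-1-\alpha^2\operatorname{Tr}(P^2),$$ and both $F_1$ and $F_2$ are supermodular on $\{S\subseteq\mathcal{X}:0<\pi(S)<1\}$.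
   Context: $S'=\mathcal{X}\setminus S$; $g(S)=\frac{1}{\pi(S)\pi(S')}\sum_{x\in S,\,y\in S'}\pi(x)P(x,y)$. $\pi$-reversible means $\pi(x)P(x,y)=\pi(y)P(y,x)$. $A_\alpha(S)=\alpha P+(1-\alpha)G_S$ where $G_S(x,y)=\pi(y)/\pi(\mathcal{O}(x))$ if $y\in\mathcal{O}(x)$ and $0$ otherwise, $\mathcal{O}(x)\in\{S,S'\}$ the block containing $x$. $\Pi$ is the matrix with every row equal to $\pi$; $\|M\|_{F,\pi}^2=\operatorname{Tr}(M^*M)$ with $M^*(x,y)=\pi(y)M(y,x)/\pi(x)$. A set function $f$ is supermodular if $f(A\cap B)+f(A\cup B)\ge f(A)+f(B)$. *)

From HB Require Import structures.
From mathcomp Require Import all_boot all_order all_algebra.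
Set Implicit Arguments. Unset Strict Implicit. Unset Printing Implicit Defensive.
Import Order.TTheory GRing.Theory Num.Theory.
Local Open Scope ring_scope.

Section Defs.
Variables (R : realFieldType) (n : nat).

Definition prob_pos (pi : 'I_n -> R) : Prop :=
  (forall x, 0 < pi x) /\ \sum_(x < n) pi x = 1.

Definition transition (P : 'M[R]_n) : Prop :=
  (forall x y, 0 <= P x y) /\ (forall x, \sum_(y < n) P x y = 1).

Definition reversible (pi : 'I_n -> R) (P : 'M[R]_n) : Prop :=
  forall x y, pi x * P x y = pi y * P y x.

Definition piS (pi : 'I_n -> R) (S : {set 'I_n}) : R := \sum_(x in S) pi x.

Definition flow (pi : 'I_n -> R) (P : 'M[R]_n) (A B : {set 'I_n}) : R :=
  \sum_(x in A) \sum_(y in B) pi x * P x y.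

Definition gS (pi : 'I_n -> R) (P : 'M[R]_n) (S : {set 'I_n}) : R :=
  (piS pi S * piS pi (~: S))^-1 * flow pi P S (~: S).

Definition block (S : {set 'I_n}) (x : 'I_n) : {set 'I_n} :=
  if x \in S then S else ~: S.

Definition GS (pi : 'I_n -> R) (S : {set 'I_n}) : 'M[R]_n :=
  \matrix_(x, y) (if y \in block S x then pi y / piS pi (block S x) else 0).

Definition Aalpha (pi : 'I_n -> R) (P : 'M[R]_n) (alpha : R) (S : {set 'I_n})
  : 'M[R]_n := alpha *: P + (1 - alpha) *: GS pi S.

Definition PiM (pi : 'I_n -> R) : 'M[R]_n := \matrix_(x, y) pi y.

(* adjoint in L^2(pi): M^*(x,y) = pi(y) M(y,x) / pi(x) *)
Definition adjpi (pi : 'I_n -> R) (M : 'M[R]_n) : 'M[R]_n :=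
  \matrix_(x, y) (pi y * M y x / pi x).

Definition frob2 (pi : 'I_n -> R) (M : 'M[R]_n) : R := \tr (adjpi pi M *m M).

Definition F1 (pi : 'I_n -> R) (P : 'M[R]_n) (alpha : R) (S : {set 'I_n}) : R :=
  2 * alpha * (1 - alpha) *
  ((piS pi S)^-1 * flow pi P (~: S) (~: S) + (piS pi (~: S))^-1 * flow pi P S S).

Definition F2 (pi : 'I_n -> R) (P : 'M[R]_n) (alpha : R) (S : {set 'I_n}) : R :=
  2 * alpha * (1 - alpha) / (piS pi S * piS pi (~: S))
  + 6 * alpha ^+ 2 - 4 * alpha - 1 - alpha ^+ 2 * \tr (P *m P).

Definition in_fam (pi : 'I_n -> R) (S : {set 'I_n}) : Prop :=
  0 < piS pi S < 1.

Definition supermodular_on (pi : 'I_n -> R) (f : {set 'I_n} -> R) : Prop :=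
  forall A B : {set 'I_n},
    in_fam pi A -> in_fam pi B -> in_fam pi (A :&: B) -> in_fam pi (A :|: B) ->
    f A + f B <= f (A :&: B) + f (A :|: B).

End Defs.

(* Writing <X, Y> := sum_(x, y) pi(x) X(x,y) Y(x,y) / pi(y), the norm ||M||_{F,pi}^2
   is <M, M>, and A_alpha(S) - Pi = alpha P + (1 - alpha) G_S - Pi combines three
   stochastic matrices, so expanding the quadratic form leaves explicit pairings:
   <P, P> = Tr(P^2) by reversibility, <G_S, G_S> = 2, every pairing with Pi is 1,
   and <P, G_S> = Q(S,S)/pi(S) + Q(S',S')/pi(S'), where Q(A,B) is the flow
   sum_(x in A, y in B) pi(x) P(x,y); by stochasticity and reversibility
   Q(S,S) = pi(S) - Q(S,S') and Q(S',S') = pi(S') - Q(S,S').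
   Supermodularity: t |-> 1/t is convex and pi is modular, so S |-> 1/pi(S) is
   supermodular; S |-> Q(S,S) is nonnegative, nondecreasing and supermodular, hence
   so is its product with the nondecreasing supermodular S |-> 1/pi(S'); and
   complementation preserves supermodularity.  For F_2 use
   1/(pi(S) pi(S')) = 1/pi(S) + 1/pi(S'). *)

From HB Require Import structures.
From mathcomp Require Import all_boot all_order all_algebra.
From mathcomp Require Import ring lra.
Import Order.TTheory GRing.Theory Num.Theory.
Set Implicit Arguments. Unset Strict Implicit. Unset Printing Implicit Defensive.
Local Open Scope ring_scope.

Lemma invr_spread_le (R : realFieldType) (a b x y : R) :
  0 < a -> a <= x -> a <= y -> x + y = a + b -> x^-1 + y^-1 <= a^-1 + b^-1.
Proof.
move=> a_gt0 le_ax le_ay sum_eq.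
have -> : b = x + y - a by rewrite sum_eq; ring.
have x_gt0 : 0 < x by exact: lt_le_trans le_ax.
have y_gt0 : 0 < y by exact: lt_le_trans le_ay.
have b_gt0 : 0 < x + y - a by lra.
rewrite -subr_ge0.
have -> : a^-1 + (x + y - a)^-1 - (x^-1 + y^-1)
    = (x + y) * ((x - a) * (y - a)) / (x * y * a * (x + y - a)).
  by field; rewrite !gt_eqF.
apply: divr_ge0; first by rewrite !mulr_ge0 ?subr_ge0 ?addr_ge0 // ltW.
by rewrite !mulr_ge0 // ltW.
Qed.

Section SetMeasure.
Variables (R : realFieldType) (n : nat) (pi : 'I_n -> R).
Implicit Types A B S : {set 'I_n}.

Lemma piSE S : piS pi S = \sum_x (x \in S)%:R * pi x.
Proof.
rewrite /piS big_mkcond; apply: eq_bigr => x _.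
by case: (x \in S); rewrite ?mul1r ?mul0r.
Qed.

Lemma piS_setUC S : piS pi S + piS pi (~: S) = \sum_x pi x.
Proof.
rewrite !piSE -big_split; apply: eq_bigr => x _.
by rewrite in_setC; case: (x \in S) => /=; ring.
Qed.

Lemma piS_setIU A B :
  piS pi (A :&: B) + piS pi (A :|: B) = piS pi A + piS pi B.
Proof.
rewrite !piSE -!big_split; apply: eq_bigr => x _ /=.
by rewrite in_setI in_setU; case: (x \in A); case: (x \in B) => /=; ring.
Qed.

Lemma piS_setC S : \sum_x pi x = 1 -> piS pi (~: S) = 1 - piS pi S.
Proof. by move=> <-; rewrite -(piS_setUC S); ring. Qed.

Hypothesis pi_ge0 : forall x, 0 <= pi x.

Lemma piS_subset A B : A \subset B -> piS pi A <= piS pi B.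
Proof.
move=> /subsetP sAB; rewrite !piSE; apply: ler_sum => x _; apply: ler_wpM2r => //.
by case xA: (x \in A); rewrite ?(sAB x xA) ?ler0n.
Qed.

Hypothesis pi_gt0 : forall x, 0 < pi x.

Lemma piS_gt0 B y : y \in B -> 0 < piS pi B.
Proof.
move=> yB; rewrite /piS (bigD1 y) //= ltr_pwDl //.
by apply: sumr_ge0 => x _; rewrite ltW.
Qed.

Lemma piS_neq0_gt0 S : S != set0 -> 0 < piS pi S.
Proof. by case/set0Pn => y; exact: piS_gt0. Qed.

Lemma piS_setC_gt0 S : S != [set: 'I_n] -> 0 < piS pi (~: S).
Proof.
move=> S_neqT; have /subsetPn [y _ yNS] : ~~ ([set: 'I_n] \subset S) by rewrite subTset.
by apply: (@piS_gt0 _ y); rewrite in_setC.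
Qed.

End SetMeasure.

Section SupermodularOn.
Variables (R : realFieldType) (n : nat) (pi : 'I_n -> R).
Implicit Types (f g : {set 'I_n} -> R) (S : {set 'I_n}).

Definition nondecreasing_on f : Prop :=
  forall A B, in_fam pi A -> in_fam pi B -> A \subset B -> f A <= f B.

Lemma eq_supermodular_on f g :
  (forall S, in_fam pi S -> f S = g S) ->
  supermodular_on pi f -> supermodular_on pi g.
Proof. by move=> fg f_sup A B hA hB hI hU; rewrite -!fg //; exact: f_sup. Qed.

Lemma supermodular_onD f g :
  supermodular_on pi f -> supermodular_on pi g ->
  supermodular_on pi (fun S => f S + g S).
Proof.
move=> f_sup g_sup A B hA hB hI hU.
by have := f_sup A B hA hB hI hU; have := g_sup A B hA hB hI hU; lra.
Qed.

Lemma supermodular_on_affine c d f : 0 <= c ->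
  supermodular_on pi f -> supermodular_on pi (fun S => c * f S + d).
Proof.
move=> c_ge0 f_sup A B hA hB hI hU.
by have := ler_wpM2l c_ge0 (f_sup A B hA hB hI hU); rewrite !mulrDr; lra.
Qed.

Lemma supermodular_onM f g :
  (forall S, in_fam pi S -> 0 <= f S) -> (forall S, in_fam pi S -> 0 <= g S) ->
  nondecreasing_on f -> nondecreasing_on g ->
  supermodular_on pi f -> supermodular_on pi g ->
  supermodular_on pi (fun S => f S * g S).
Proof.
move=> f_ge0 g_ge0 f_mono g_mono f_sup g_sup A B hA hB hI hU.
have := f_sup A B hA hB hI hU; have := g_sup A B hA hB hI hU.
have := f_mono _ _ hI hA (subsetIl A B); have := f_mono _ _ hI hB (subsetIr A B).
have := g_mono _ _ hI hA (subsetIl A B); have := g_mono _ _ hI hB (subsetIr A B).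
have := f_ge0 _ hI; have := g_ge0 _ hI.
move: (f A) (f B) (f (A :&: B)) (f (A :|: B)) (g A) (g B) (g (A :&: B)) (g (A :|: B)).
move=> fA fB fI fU gA gB gI gU gI_ge0 fI_ge0 gIB gIA fIB fIA g_sup' f_sup'.
(* [fU * gU] dominates the product of the excesses [fA + fB - fI] and
   [gA + gB - gI], which exceeds [fA * gA + fB * gB - fI * gI] by a cross term
   that is nonnegative by monotonicity. *)
have exc_le : (fA + fB - fI) * (gA + gB - gI) <= fU * gU.
  by apply: ler_pM; lra.
have cross_ge0 : 0 <= (fA - fI) * (gB - gI) + (fB - fI) * (gA - gI).
  by rewrite addr_ge0 // mulr_ge0 // subr_ge0.
have expand : fI * gI + (fA + fB - fI) * (gA + gB - gI) - (fA * gA + fB * gB)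
  = (fA - fI) * (gB - gI) + (fB - fI) * (gA - gI) by ring.
lra.
Qed.

Hypothesis pi_sum1 : \sum_x pi x = 1.

Lemma in_fam_setC S : in_fam pi (~: S) <-> in_fam pi S.
Proof. by rewrite /in_fam piS_setC //; split => /andP [? ?]; apply/andP; split; lra. Qed.

Lemma supermodular_on_setC f :
  supermodular_on pi f -> supermodular_on pi (fun S => f (~: S)).
Proof.
move=> f_sup A B hA hB hI hU; rewrite [in X in _ <= X]addrC setCI setCU.
by apply: f_sup; rewrite ?in_fam_setC // -?setCI -?setCU in_fam_setC.
Qed.

End SupermodularOn.

Section InverseMass.
Variables (R : realFieldType) (n : nat) (pi : 'I_n -> R).
Hypotheses (pi_ge0 : forall x, 0 <= pi x) (pi_sum1 : \sum_x pi x = 1).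

Lemma supermodular_invr_piS : supermodular_on pi (fun S => (piS pi S)^-1).
Proof.
move=> A B _ _ /andP [AB_gt0 _] _.
apply: invr_spread_le AB_gt0 _ _ (esym (piS_setIU pi A B));
  exact/piS_subset/subsetIl || exact/piS_subset/subsetIr.
Qed.

Lemma supermodular_invr_piS_setC :
  supermodular_on pi (fun S => (piS pi (~: S))^-1).
Proof. exact: (supermodular_on_setC pi_sum1 supermodular_invr_piS). Qed.

Lemma nondecreasing_invr_piS_setC :
  nondecreasing_on pi (fun S => (piS pi (~: S))^-1).
Proof.
move=> A B _ hB sAB; move/in_fam_setC: hB => /(_ pi_sum1) /andP [CB_gt0 _].
have le_CBA : piS pi (~: B) <= piS pi (~: A) by rewrite piS_subset ?setCS.
by rewrite lef_pV2 ?posrE // (lt_le_trans CB_gt0).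
Qed.

End InverseMass.

Section Flow.
Variables (R : realFieldType) (n : nat) (pi : 'I_n -> R) (P : 'M[R]_n).
Implicit Types A B S : {set 'I_n}.

Lemma flowE A B :
  flow pi P A B = \sum_x \sum_y ((x \in A) && (y \in B))%:R * (pi x * P x y).
Proof.
rewrite /flow big_mkcond; apply: eq_bigr => x _; rewrite big_mkcond.
case: (x \in A) => /=; last by rewrite big1 // => y _; rewrite mul0r.
by apply: eq_bigr => y _; case: (y \in B); rewrite ?mul1r ?mul0r.
Qed.

Lemma flow_rows_sum1 A B :
  (forall x, x \in A -> \sum_(y in B) P x y = 1) -> flow pi P A B = piS pi A.
Proof. by move=> P_rows; apply: eq_bigr => x xA; rewrite -mulr_sumr P_rows // mulr1. Qed.

Lemma flow_sym A B : reversible pi P -> flow pi P A B = flow pi P B A.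
Proof.
move=> P_rev; rewrite /flow exchange_big; apply: eq_bigr => y _.
by apply: eq_bigr => x _; rewrite P_rev.
Qed.

Lemma flow_setC_r A B : (forall x, \sum_y P x y = 1) ->
  flow pi P A B + flow pi P A (~: B) = piS pi A.
Proof.
move=> P_rows; rewrite /flow /piS -big_split; apply: eq_bigr => x _ /=.
rewrite -!mulr_sumr -mulrDr -[RHS]mulr1 -(P_rows x) [in RHS](bigID (mem B)) /=.
by congr (_ * (_ + _)); apply: eq_bigl => y; rewrite in_setC.
Qed.

Lemma flow_diag_cut S : (forall x, \sum_y P x y = 1) ->
  flow pi P S S = piS pi S - flow pi P S (~: S).
Proof. by move=> P_rows; rewrite -(flow_setC_r S S P_rows) addrK. Qed.

Lemma flow_diagC_cut S : (forall x, \sum_y P x y = 1) -> reversible pi P ->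
  flow pi P (~: S) (~: S) = piS pi (~: S) - flow pi P S (~: S).
Proof.
move=> P_rows P_rev.
by rewrite -(flow_setC_r (~: S) (~: S) P_rows) setCK (flow_sym _ _ P_rev) addrK.
Qed.

End Flow.

Section DiagonalFlow.
Variables (R : realFieldType) (n : nat) (pi : 'I_n -> R) (P : 'M[R]_n).
Hypotheses (pi_ge0 : forall x, 0 <= pi x) (pi_sum1 : \sum_x pi x = 1).
Hypothesis P_ge0 : forall x y, 0 <= P x y.
Implicit Types A B S : {set 'I_n}.

Let weight_ge0 x y : 0 <= pi x * P x y.
Proof. exact: mulr_ge0. Qed.

Lemma flow_diag_ge0 S : 0 <= flow pi P S S.
Proof. by rewrite flowE; do 2!apply: sumr_ge0 => ? _; rewrite mulr_ge0. Qed.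

Lemma flow_diag_subset A B : A \subset B -> flow pi P A A <= flow pi P B B.
Proof.
move=> /subsetP sAB; rewrite !flowE; apply: ler_sum => x _; apply: ler_sum => y _.
apply: ler_wpM2r => //; rewrite ler_nat.
by case xA: (x \in A); case yA: (y \in A); rewrite //= (sAB _ xA) (sAB _ yA).
Qed.

Lemma flow_diag_setIU A B :
  flow pi P A A + flow pi P B B <=
  flow pi P (A :&: B) (A :&: B) + flow pi P (A :|: B) (A :|: B).
Proof.
rewrite !flowE -!big_split; apply: ler_sum => x _; rewrite -!big_split.
apply: ler_sum => y _; rewrite /= -!mulrDl ler_wpM2r // !in_setI !in_setU.
by case: (x \in A); case: (x \in B); case: (y \in A); case: (y \in B) => /=; lra.
Qed.

Definition self_flow_ratio S := flow pi P S S / piS pi (~: S).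

Lemma supermodular_self_flow_ratio : supermodular_on pi self_flow_ratio.
Proof.
apply: supermodular_onM.
- by move=> S _; exact: flow_diag_ge0.
- move=> S; rewrite -in_fam_setC // => /andP [CS_gt0 _].
  by rewrite invr_ge0 ltW.
- by move=> A B _ _; exact: flow_diag_subset.
- exact: nondecreasing_invr_piS_setC.
- by move=> A B _ _ _ _; exact: flow_diag_setIU.
- exact: supermodular_invr_piS_setC.
Qed.

End DiagonalFlow.

Section SupermodularF.
Variables (R : realFieldType) (n : nat) (pi : 'I_n -> R) (P : 'M[R]_n) (alpha : R).
Hypotheses (pi_ge0 : forall x, 0 <= pi x) (pi_sum1 : \sum_x pi x = 1).
Hypothesis alpha01 : 0 <= alpha <= 1.

Let c_ge0 : 0 <= 2 * alpha * (1 - alpha).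
Proof. by case/andP: alpha01 => ? ?; rewrite !mulr_ge0 ?subr_ge0. Qed.

Lemma supermodular_F1 :
  (forall x y, 0 <= P x y) -> supermodular_on pi (F1 pi P alpha).
Proof.
move=> P_ge0; have rho_sup := supermodular_self_flow_ratio pi_ge0 pi_sum1 P_ge0.
apply: (@eq_supermodular_on _ _ _ (fun S => 2 * alpha * (1 - alpha) *
  (self_flow_ratio pi P (~: S) + self_flow_ratio pi P S) + 0)).
  by move=> S _; rewrite /F1 /self_flow_ratio setCK addr0 ![_ / _]mulrC.
apply: supermodular_on_affine c_ge0 _.
exact: (supermodular_onD (supermodular_on_setC pi_sum1 rho_sup) rho_sup).
Qed.

Lemma supermodular_F2 : supermodular_on pi (F2 pi P alpha).
Proof.
apply: (@eq_supermodular_on _ _ _ (fun S =>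
  2 * alpha * (1 - alpha) * ((piS pi S)^-1 + (piS pi (~: S))^-1)
  + (6 * alpha ^+ 2 - 4 * alpha - 1 - alpha ^+ 2 * \tr (P *m P)))).
  move=> S /andP [S_gt0 S_lt1]; rewrite /F2 piS_setC //.
  by field; rewrite !lt0r_neq0 ?subr_gt0.
apply: supermodular_on_affine c_ge0 _; apply: supermodular_onD.
  exact: supermodular_invr_piS.
exact: supermodular_invr_piS_setC.
Qed.

End SupermodularF.

Section BlockKernel.
Variables (R : realFieldType) (n : nat) (pi : 'I_n -> R).
Hypothesis pi_gt0 : forall x, 0 < pi x.
Implicit Types S : {set 'I_n}.

Lemma sum_block (F : 'I_n -> {set 'I_n} -> R) S :
  \sum_x F x (block S x) = \sum_(x in S) F x S + \sum_(x in ~: S) F x (~: S).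
Proof.
rewrite (bigID (mem S)) /=; congr (_ + _).
  by apply: eq_bigr => x xS; rewrite /block xS.
rewrite big_mkcond [RHS]big_mkcond; apply: eq_bigr => x _.
by rewrite in_setC /block; case: (x \in S).
Qed.

Lemma piS_block_gt0 S x :
  S != set0 -> S != [set: 'I_n] -> 0 < piS pi (block S x).
Proof.
move=> S_neq0 S_neqT; rewrite /block.
by case: ifP => _; [exact: piS_neq0_gt0 | exact: piS_setC_gt0].
Qed.

Lemma sum_GS_block S x : S != set0 -> S != [set: 'I_n] ->
  \sum_(y in block S x) GS pi S x y = 1.
Proof.
move=> S_neq0 S_neqT; rewrite (eq_bigr (fun y => pi y / piS pi (block S x))).
  by rewrite -mulr_suml divff // lt0r_neq0 // (piS_block_gt0 x S_neq0 S_neqT).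
by move=> y yB; rewrite mxE yB.
Qed.

Lemma GS_row_sum S x : S != set0 -> S != [set: 'I_n] -> \sum_y GS pi S x y = 1.
Proof.
move=> S_neq0 S_neqT; rewrite (bigID (mem (block S x))) /= sum_GS_block //.
by rewrite big1 ?addr0 // => y /negbTE yNB; rewrite mxE yNB.
Qed.

End BlockKernel.

Section FrobeniusIdentity.
Variables (R : realFieldType) (n : nat) (pi : 'I_n -> R).
Hypothesis pi_gt0 : forall x, 0 < pi x.
Implicit Types (X Y Z : 'M[R]_n) (S : {set 'I_n}).

Definition frob_dot X Y : R := \sum_x \sum_y pi x * X x y * Y x y / pi y.

Lemma frob2_dot X : frob2 pi X = frob_dot X X.
Proof.
rewrite /frob2 /mxtrace /frob_dot exchange_big; apply: eq_bigr => x _.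
by rewrite mxE; apply: eq_bigr => y _; rewrite !mxE; ring.
Qed.

Lemma frob_dot_expand3 a b c X Y Z :
  let M := a *: X + b *: Y + c *: Z in
  frob_dot M M = a ^+ 2 * frob_dot X X + b ^+ 2 * frob_dot Y Y
    + c ^+ 2 * frob_dot Z Z + 2 * a * b * frob_dot X Y
    + 2 * a * c * frob_dot X Z + 2 * b * c * frob_dot Y Z.
Proof.
rewrite /frob_dot !mulr_sumr -!big_split /=; apply: eq_bigr => x _.
by rewrite !mulr_sumr -!big_split /=; apply: eq_bigr => y _; rewrite !mxE; ring.
Qed.

Lemma frob_dot_PiM X : frob_dot X (PiM pi) = \sum_x pi x * \sum_y X x y.
Proof.
apply: eq_bigr => x _; rewrite mulr_sumr; apply: eq_bigr => y _.
by rewrite mxE; field; rewrite lt0r_neq0.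
Qed.

Lemma frob_dot_tr P : reversible pi P -> frob_dot P P = \tr (P *m P).
Proof.
move=> P_rev; apply: eq_bigr => x _; rewrite mxE; apply: eq_bigr => y _.
have -> : P y x = pi x * P x y / pi y by rewrite P_rev; field; rewrite lt0r_neq0.
by field; rewrite lt0r_neq0.
Qed.

Lemma frob_dot_GS X S : frob_dot X (GS pi S) =
  flow pi X S S / piS pi S + flow pi X (~: S) (~: S) / piS pi (~: S).
Proof.
rewrite /frob_dot (eq_bigr (fun x =>
  \sum_(y in block S x) pi x * X x y / piS pi (block S x))); last first.
  move=> x _; rewrite [RHS]big_mkcond; apply: eq_bigr => y _.
  rewrite !mxE; case: ifP => yB /=; last by rewrite !mulr0 mul0r.
  by field; rewrite !lt0r_neq0 // (piS_gt0 pi_gt0 yB).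
rewrite (sum_block (fun x B => \sum_(y in B) pi x * X x y / piS pi B)).
rewrite /flow !mulr_suml.
by congr (_ + _); apply: eq_bigr => x _; rewrite mulr_suml.
Qed.

Lemma frob_dot_GS_GS S : S != set0 -> S != [set: 'I_n] ->
  frob_dot (GS pi S) (GS pi S) = 2.
Proof.
move=> S_neq0 S_neqT; rewrite frob_dot_GS !flow_rows_sum1; first last.
- by move=> x xS; have := sum_GS_block pi_gt0 x S_neq0 S_neqT; rewrite /block xS.
- move=> x; rewrite in_setC => /negbTE xNS.
  by have := sum_GS_block pi_gt0 x S_neq0 S_neqT; rewrite /block xNS.
by rewrite !divff ?lt0r_neq0 ?piS_setC_gt0 ?piS_neq0_gt0.
Qed.

Lemma frob_dot_PiM_row_sum1 X : \sum_x pi x = 1 ->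
  (forall x, \sum_y X x y = 1) -> frob_dot X (PiM pi) = 1.
Proof.
move=> pi_sum1 X_rows; rewrite frob_dot_PiM -[RHS]pi_sum1.
by apply: eq_bigr => x _; rewrite X_rows mulr1.
Qed.

End FrobeniusIdentity.

Section GluedChain.
Variables (R : realFieldType) (n : nat) (pi : 'I_n -> R) (P : 'M[R]_n) (alpha : R).
Variable S : {set 'I_n}.
Hypotheses (pi_gt0 : forall x, 0 < pi x) (pi_sum1 : \sum_x pi x = 1).
Hypotheses (P_rows : forall x, \sum_y P x y = 1) (P_rev : reversible pi P).
Hypotheses (S_neq0 : S != set0) (S_neqT : S != [set: 'I_n]).

Let pS_gt0 : 0 < piS pi S. Proof. exact: piS_neq0_gt0. Qed.
Let pSC_gt0 : 0 < 1 - piS pi S.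
Proof. by rewrite -piS_setC //; exact: piS_setC_gt0. Qed.

Lemma frob2_Aalpha_sub_PiM :
  frob2 pi (Aalpha pi P alpha S - PiM pi)
  = alpha ^+ 2 * \tr (P *m P) - 2 * alpha * (1 - alpha) * gS pi P S
    + 1 - 2 * alpha ^+ 2.
Proof.
have PiM_rows x : \sum_y PiM pi x y = 1.
  by rewrite -pi_sum1; apply: eq_bigr => y _; rewrite mxE.
have -> : Aalpha pi P alpha S - PiM pi
    = alpha *: P + (1 - alpha) *: GS pi S + (-1) *: PiM pi by rewrite scaleN1r.
rewrite frob2_dot frob_dot_expand3 frob_dot_tr // frob_dot_GS_GS //.
rewrite !frob_dot_PiM_row_sum1 // => [|x]; last exact: GS_row_sum.
rewrite frob_dot_GS // (flow_diag_cut pi S P_rows) (flow_diagC_cut S P_rows P_rev).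
by rewrite /gS !piS_setC //; field; rewrite !lt0r_neq0.
Qed.

Lemma F1_sub_F2E :
  F1 pi P alpha S - F2 pi P alpha S
  = alpha ^+ 2 * \tr (P *m P) - 2 * alpha * (1 - alpha) * gS pi P S
    + 1 - 2 * alpha ^+ 2.
Proof.
rewrite /gS /F1 /F2 (flow_diag_cut pi S P_rows) (flow_diagC_cut S P_rows P_rev).
by rewrite !piS_setC //; field; rewrite !lt0r_neq0.
Qed.

End GluedChain.

Theorem corollary4p14 (R : realFieldType) (n : nat) (pi : 'I_n -> R)
  (P : 'M[R]_n) (alpha : R) :
  prob_pos pi -> transition P -> reversible pi P -> 0 <= alpha <= 1 ->
  (forall S : {set 'I_n}, S != set0 -> S != [set: 'I_n] ->
     frob2 pi (Aalpha pi P alpha S - PiM pi)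
       = alpha ^+ 2 * \tr (P *m P) - 2 * alpha * (1 - alpha) * gS pi P S
         + 1 - 2 * alpha ^+ 2
     /\ alpha ^+ 2 * \tr (P *m P) - 2 * alpha * (1 - alpha) * gS pi P S
         + 1 - 2 * alpha ^+ 2
       = F1 pi P alpha S - F2 pi P alpha S)
  /\ supermodular_on pi (F1 pi P alpha)
  /\ supermodular_on pi (F2 pi P alpha).
Proof.
move=> [pi_gt0 pi_sum1] [P_ge0 P_rows] P_rev alpha01.
have pi_ge0 x : 0 <= pi x by exact: ltW.
split; last split.
- by move=> S S_neq0 S_neqT; split; [exact: frob2_Aalpha_sub_PiM | exact/esym/F1_sub_F2E].
- exact: supermodular_F1.
- exact: supermodular_F2.
Qed.
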